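(* Let $\beta>0$, $F>0$, and $(f_{0,k})_{k\ge1}$ with $\sum_k k^{2\beta}f_{0,k}^2\le F^2$. For $n\ge1$ let $X_k=f_{0,k}+n^{-1/2}\xi_k$, $k\ge1$, with $\xi_k$ i.i.d. $\mathcal N(0,1)$. Let $K_n=n^{1/(2\beta+1)}$, $N:=\{k:|f_{0,k}|\le1/\sqrt n\}$, and for $k\ge1,\ell\ge0$, $$A_{k,\ell}:=\Big\{|X_k|\le\sqrt{\tfrac{4\log(n(\ell+1)^2)}{n}}\Big\},\qquad A_n:=\bigcap_{K_n<k\le n,\,k\in N}A_{k,0}\ \cap\ \bigcap_{\ell\ge1}\ \bigcap_{\ell n<k\le(\ell+1)n,\,k\in N}A_{k,\ell}.$$ Then $P_{f_0}(A_n^c)\to0$ as $n\to\infty$.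
   Context: $P_{f_0}$ is the law of $(X_k)_{k\ge1}$ in the stated sequence model. *)

From HB Require Import structures.
From mathcomp Require Import all_boot all_order all_algebra.
From mathcomp Require Import all_classical all_reals all_analysis.
Set Implicit Arguments. Unset Strict Implicit. Unset Printing Implicit Defensive.
Import Order.TTheory GRing.Theory Num.Theory.
Local Open Scope classical_set_scope.
Local Open Scope ring_scope.

Definition mutually_independent d (T : measurableType d) (R : realType)
  (P : probability T R) (xi : nat -> {RV P >-> R}) (I : set nat) : Prop :=
  forall (J : seq nat), uniq J -> (forall j, j \in J -> I j) ->
  forall B : nat -> set R, (forall j, measurable (B j)) ->
  P (\bigcap_(j in [set j | j \in J]) (xi j @^-1` B j)) =
  (\prod_(j <- J) P (xi j @^-1` B j))%E.

Definition iid_std_normal d (T : measurableType d) (R : realType)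
  (P : probability T R) (xi : nat -> {RV P >-> R}) : Prop :=
  mutually_independent xi [set k | (1 <= k)%N] /\
  forall k, (1 <= k)%N -> forall A : set R, measurable A ->
    distribution P (xi k) A = normal_prob 0 1 A.

Definition obs d (T : measurableType d) (R : realType) (P : probability T R)
  (f0 : nat -> R) (xi : nat -> {RV P >-> R}) (n k : nat) (w : T) : R :=
  f0 k + (Num.sqrt (n%:R))^-1 * xi k w.

Definition A_kl d (T : measurableType d) (R : realType) (P : probability T R)
  (f0 : nat -> R) (xi : nat -> {RV P >-> R}) (n k l : nat) : set T :=
  [set w | `|obs f0 xi n k w| <=
           Num.sqrt (4 * ln (n%:R * (l.+1)%:R ^+ 2) / n%:R)].

Definition K_n (R : realType) (beta : R) (n : nat) : R :=
  powR (n%:R) (1 / (2 * beta + 1)).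

Definition small_set (R : realType) (f0 : nat -> R) (n : nat) : set nat :=
  [set k | `|f0 k| <= 1 / Num.sqrt (n%:R)].

Definition A_n d (T : measurableType d) (R : realType) (P : probability T R)
  (beta : R) (f0 : nat -> R) (xi : nat -> {RV P >-> R}) (n : nat) : set T :=
  (\bigcap_(k in [set k : nat | K_n beta n < k%:R /\ (k <= n)%N /\
                                small_set f0 n k]) A_kl f0 xi n k 0)
  `&`
  (\bigcap_(l in [set l : nat | (1 <= l)%N])
     \bigcap_(k in [set k : nat | (l * n < k)%N /\ (k <= l.+1 * n)%N /\
                                  small_set f0 n k]) A_kl f0 xi n k l).

From HB Require Import structures.
From mathcomp Require Import all_boot all_order all_algebra.
From mathcomp Require Import all_classical all_reals all_analysis.
From mathcomp Require Import ring lra zify measurable_realfun.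
Import Order.TTheory GRing.Theory Num.Theory.
Local Open Scope classical_set_scope.
Local Open Scope ring_scope.

(* For [k] in [N], [|X_k|] can only exceed the level [sqrt (4 log m / n)],
   [m = n (l + 1)^2], if [|xi_k| >= 2 sqrt (log m) - 1], and the standard
   Gaussian tail bounds the probability of that by [2 e^{3/2} m^{-3/2}].
   A union bound over the [n] indices of the [l]-th block and over [l] then
   gives [P (A_n^c) <= 2 e^{3/2} n^{-1/2} sum_l (l + 1)^{-2} <= 4 e^{3/2} / sqrt n]. *)

Section gaussian_tail.
Variable R : realType.

Lemma measurable_norm_ge (s : R) : measurable [set x : R | s <= `|x|].
Proof.
rewrite -[X in measurable X]setTI.
have -> : [set x : R | s <= `|x|] = Num.norm @^-1` `[s, +oo[.
  by apply/seteqP; split => x /=; rewrite in_itv /= andbT.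
exact: normr_measurable.
Qed.

(* Completing the square: [x^2 = s^2 + (x - s)^2 + 2 s (x - s)], and the last
   term is nonnegative when [x >= s >= 0]. *)
Lemma normal_pdf01_le_shift (s x : R) : 0 <= s -> s <= `|x| ->
  normal_pdf 0 1 x <=
  expR (- s ^+ 2 / 2) * (normal_pdf s 1 x + normal_pdf (- s) 1 x).
Proof.
move=> s0 sx; rewrite !normal_pdfE ?oner_neq0 //= /normal_fun.
rewrite expr1n subr0 mulrDr.
have term0 y : 0 <= expR (- s ^+ 2 / 2) * (normal_peak 1 * expR y).
  by rewrite !mulr_ge0 ?expR_ge0 ?normal_peak_ge0.
have [x0|x0] := lerP 0 x.
- rewrite ger0_norm // in sx; rewrite -[leLHS]addr0; apply: lerD => //.
  by rewrite mulrCA ler_wpM2l ?normal_peak_ge0 // -expRD ler_expR; nra.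
- rewrite ltr0_norm // in sx; rewrite -[leLHS]add0r; apply: lerD => //.
  by rewrite mulrCA ler_wpM2l ?normal_peak_ge0 // -expRD ler_expR; nra.
Qed.

Lemma normal_prob01_tail_le (s : R) : 0 <= s ->
  (normal_prob 0 1 [set x : R | (s <= `|x|)%R] <= (2 * expR (- s ^+ 2 / 2))%:E)%E.
Proof.
move=> s0; set S := [set x | s <= `|x|]; set e := expR (- s ^+ 2 / 2).
have mS : measurable S by exact: measurable_norm_ge.
have mpdf : forall m : R, measurable_fun S (EFin \o normal_pdf m 1).
  by move=> m; apply/measurable_EFinP/measurable_funTS; exact: measurable_normal_pdf.
have pdf0 (m x : R) : (0 <= (normal_pdf m 1 x)%:E)%E by rewrite lee_fin normal_pdf_ge0.
rewrite /normal_prob.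
apply: (@le_trans _ _ (\int[lebesgue_measure]_(x in S)
    (e%:E * ((normal_pdf s 1 x)%:E + (normal_pdf (- s) 1 x)%:E)))%E).
  apply: ge0_le_integral => //.
  - exact: mpdf.
  - apply: (emeasurable_funM (f := cst e%:E)) => //.
    by apply: emeasurable_funD; exact: mpdf.
  - by move=> x Sx; rewrite -EFinD -EFinM lee_fin normal_pdf01_le_shift.
rewrite ge0_integralZl ?lee_fin ?expR_ge0 //; last first.
- by move=> x _; rewrite adde_ge0.
- by apply: emeasurable_funD; exact: mpdf.
rewrite ge0_integralD //; [|exact: mpdf..].
rewrite [(2 * e)%R]mulrC EFinM lee_pmul2l ?lte_fin ?expR_gt0 //.
rewrite -[2%:E]/(1 + 1)%E; apply: leeD.
- exact: (probability_le1 (normal_prob s 1) mS).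
- exact: (probability_le1 (normal_prob (- s) 1) mS).
Qed.

End gaussian_tail.

Section real_bounds.
Variable R : realType.

Lemma norm_perturbed_gt (q a r x : R) : 0 < q ->
  `|a| <= q^-1 -> r < `|a + q^-1 * x| -> r * q - 1 < `|x|.
Proof.
move=> q0 ha hr; rewrite ltrBlDl -ltr_pdivlMr // mulrDl mul1r [`|x| * _]mulrC.
apply: (lt_le_trans hr); apply: (le_trans (ler_normD _ _)).
by rewrite lerD // normrM ger0_norm // invr_ge0 ltW.
Qed.

Lemma sqr_max_sub1_ge (t : R) : 0 <= t ->
  3 * t ^+ 2 / 8 - 3 / 2 <= (Num.max (t - 1) 0) ^+ 2 / 2.
Proof.
move=> t0; have [t1|t1] := lerP (t - 1) 0.
- by rewrite expr0n mul0r; nra.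
- by have := sqr_ge0 (t - 4); nra.
Qed.

(* With [t^2 = 4 log m] the tail is [e^{3/2} m^{-3/2}]: one power of [m] pays
   for the union bound, the remaining [m^{-1/2} <= n^{-1/2}] makes it vanish. *)
Lemma gauss_level_le (n m : R) : 1 <= n <= m ->
  2 * expR (- (Num.max (2 * Num.sqrt (ln m) - 1) 0) ^+ 2 / 2) <=
  2 * expR (3 / 2) * expR (- (ln n / 2)) / m.
Proof.
move=> /andP[n1 nm]; have m0 : 0 < m by apply: lt_le_trans nm; lra.
have lnm0 : 0 <= ln m by apply: ln_ge0; apply: le_trans nm.
have lnnm : ln n <= ln m by rewrite ler_ln ?posrE //; lra.
have t2 : (2 * Num.sqrt (ln m)) ^+ 2 = 4 * ln m.
  by rewrite exprMn sqr_sqrtr //; ring.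
have t0 : 0 <= 2 * Num.sqrt (ln m) by rewrite mulr_ge0 ?sqrtr_ge0.
have := sqr_max_sub1_ge _ t0; rewrite t2 => hs.
rewrite -!mulrA ler_pM2l // -[m^-1]lnK ?posrE ?invr_gt0 // lnV ?posrE //.
rewrite -!expRD ler_expR; lra.
Qed.

Lemma sum_inv_sqr_le (N : nat) :
  \sum_(0 <= l < N.+1) ((l.+1)%:R ^+ 2 : R)^-1 <= 2 - (N.+1)%:R^-1.
Proof.
elim: N => [|N IH]; first by rewrite big_nat1 expr1n invr1; lra.
rewrite big_nat_recr //=; apply: (le_trans (lerD IH (lexx _))).
set a : R := N.+1%:R; have a1 : 1 <= a by rewrite ler1n.
have -> : (N.+2%:R : R) = a + 1 by rewrite /a -natr1.
have telescope : a^-1 - (a + 1)^-1 = (a * (a + 1))^-1.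
  by field; rewrite !gt_eqF //; lra.
have : ((a + 1) ^+ 2)^-1 <= (a * (a + 1))^-1.
  by rewrite lef_pV2 ?posrE ?mulr_gt0 ?exprn_gt0 //; lra.
clearbody a; lra.
Qed.

Lemma nneseries_inv_sqr_le (c : R) : 0 <= c ->
  (\sum_(0 <= l <oo) (c / (l.+1)%:R ^+ 2)%:E <= (c * 2)%:E)%E.
Proof.
move=> c0; apply: lime_le.
  by apply: is_cvg_nneseries => l _ _; rewrite lee_fin divr_ge0 // exprn_ge0.
apply: nearW => -[|N]; first by rewrite big_geq // lee_fin mulr_ge0.
rewrite sumEFin lee_fin -mulr_sumr ler_wpM2l //.
apply: (le_trans (sum_inv_sqr_le N)).
by rewrite lerBlDr lerDl invr_ge0.
Qed.

Lemma sqrt_level_mulE (n u : R) : 0 < n -> 0 <= u ->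
  Num.sqrt (4 * u / n) * Num.sqrt n = 2 * Num.sqrt u.
Proof.
move=> n0 u0; rewrite -sqrtrM; last by rewrite divr_ge0 ?mulr_ge0 // ltW.
rewrite divfK ?gt_eqF // sqrtrM // (_ : 4 = 2 ^+ 2 :> R); last by ring.
by rewrite sqrtr_sqr ger0_norm.
Qed.

End real_bounds.

Section union_bound.
Variables (d : measure_display) (T : measurableType d) (R : realType).
Variables (P : probability T R) (f0 : nat -> R) (xi : nat -> {RV P >-> R}).
Hypothesis xi_normal : forall k, (1 <= k)%N -> forall A : set R,
  measurable A -> distribution P (xi k) A = normal_prob 0 1 A.

Lemma measurable_A_kl n k l : measurable (A_kl f0 xi n k l).
Proof.
pose g x := `|f0 k + (Num.sqrt n%:R)^-1 * x|.
have -> : A_kl f0 xi n k l =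
    xi k @^-1` (g @^-1` `]-oo, Num.sqrt (4 * ln (n%:R * l.+1%:R ^+ 2) / n%:R)]).
  by apply/seteqP; split => w /=; rewrite in_itv.
have mg : measurable_fun setT g.
  apply: measurableT_comp; first exact: normr_measurable.
  by apply: measurable_funD => //; exact: measurable_funM.
by apply: measurable_funPTI; rewrite -[X in measurable X]setTI; exact: mg.
Qed.

Lemma P_notA_kl_le n k l : (1 <= n)%N -> (1 <= k)%N -> small_set f0 n k ->
  (P (~` A_kl f0 xi n k l) <=
   (2 * expR (3 / 2) * expR (- (ln n%:R / 2)) / (n%:R * l.+1%:R ^+ 2))%:E)%E.
Proof.
move=> n1 k1; rewrite /small_set div1r => hk; set m : R := n%:R * _.
set s := Num.max (2 * Num.sqrt (ln m) - 1) 0.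
have n1R : (1 : R) <= n%:R by rewrite ler1n.
have nm : n%:R <= m by rewrite ler_peMr ?ler0n // exprn_ege1 // ler1n.
have lnm0 : 0 <= ln m by apply: ln_ge0; apply: le_trans nm.
have sqrtn0 : 0 < Num.sqrt (n%:R : R) by rewrite sqrtr_gt0 ltr0n.
set S := [set x : R | s <= `|x|].
have mS : measurable S by exact: measurable_norm_ge.
have tail_sub : ~` A_kl f0 xi n k l `<=` xi k @^-1` S.
  move=> w /= /negP; rewrite -ltNge => hw.
  have := norm_perturbed_gt _ _ _ _ _ sqrtn0 hk hw.
  rewrite sqrt_level_mulE ?ltr0n // => /ltW hs.
  by rewrite /S /= ge_max hs normr_ge0.
apply: (@le_trans _ _ (P (xi k @^-1` S))).
  apply: le_measure tail_sub; rewrite inE.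
  - exact/measurableC/measurable_A_kl.
  - exact: measurable_funPTI.
have := xi_normal _ k1 _ mS; rewrite /distribution /pushforward => ->.
have s0 : 0 <= s by rewrite le_max lexx orbT.
apply: le_trans (normal_prob01_tail_le _ _ s0) _.
by rewrite lee_fin gauss_level_le // n1R.
Qed.

Definition violation n l k : set T :=
  ~` A_kl f0 xi n k l `&` [set _ | small_set f0 n k].

Definition block_violation n l : set T :=
  \big[setU/set0]_(i < n) violation n l (l * n + i).+1.

Lemma violationE n l k : violation n l k =
  if `[< small_set f0 n k >] then ~` A_kl f0 xi n k l else set0.
Proof.
rewrite /violation; case: asboolP => hk.
- by rewrite (_ : [set _ | _] = setT) ?setIT //; apply/seteqP; split.
- by rewrite (_ : [set _ | _] = set0) ?setI0 //; apply/seteqP; split.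
Qed.

Lemma measurable_violation n l k : measurable (violation n l k).
Proof. by rewrite violationE; case: ifP => _ //; exact/measurableC/measurable_A_kl. Qed.

Lemma notA_n_sub beta n : ~` A_n beta f0 xi n `<=` \bigcup_l block_violation n l.
Proof.
have block_mem l k w : (l * n < k <= l.+1 * n)%N -> small_set f0 n k ->
    ~ A_kl f0 xi n k l w -> (\bigcup_l block_violation n l) w.
  move=> /andP[lk kl] hk hA; exists l => //.
  rewrite /block_violation -(bigcup_mkord _ (fun i => violation n l (l * n + i).+1)).
  exists (k - l * n).-1; first by rewrite /=; lia.
  by have -> : (l * n + (k - l * n).-1).+1 = k by lia.
move=> w notA; apply: contrapT => notU; apply: notA; split.
- move=> k /= [Kk [kn hk]]; apply: contrapT => /block_mem; apply: contra_not notU.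
  apply; rewrite // mul0n mul1n kn andbT -(ltr_nat R).
  exact: le_lt_trans (powR_ge0 _ _) Kk.
- move=> l /= _ k /= [lk [kl hk]]; apply: contrapT => /block_mem; apply: contra_not notU.
  by apply; rewrite // lk.
Qed.

Lemma P_block_violation_le n l : (1 <= n)%N ->
  (P (block_violation n l) <=
   (2 * expR (3 / 2) * expR (- (ln n%:R / 2)) / l.+1%:R ^+ 2)%:E)%E.
Proof.
move=> n1; set c : R := 2 * expR (3 / 2) * expR (- (ln n%:R / 2)).
apply: le_trans (Boole_inequality P (fun i _ => measurable_violation n l (l * n + i).+1)) _.
apply: (@le_trans _ _ (\sum_(i < n) (c / (n%:R * l.+1%:R ^+ 2))%:E)%E).
  apply: lee_sum => i _; rewrite violationE; case: asboolP => hk.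
  - exact: P_notA_kl_le.
  - by rewrite measure0 lee_fin divr_ge0 ?mulr_ge0 ?expR_ge0.
rewrite sumEFin lee_fin sumr_const card_ord -[leLHS]mulr_natr.
have n0 : (n%:R : R) != 0 by rewrite pnatr_eq0 -lt0n.
suff -> : c / (n%:R * l.+1%:R ^+ 2) * n%:R = c / l.+1%:R ^+ 2 by [].
by field; rewrite nat1r pnatr_eq0 n0.
Qed.

Lemma P_notA_n_le beta n : (1 <= n)%N ->
  (P (~` A_n beta f0 xi n) <= (2 * expR (3 / 2) * expR (- (ln n%:R / 2)) * 2)%:E)%E.
Proof.
move=> n1; have mA : measurable (~` A_n beta f0 xi n).
  apply/measurableC/measurableI; apply: bigcap_measurableType => l _.
    exact: measurable_A_kl.
  by apply: bigcap_measurableType => k _; exact: measurable_A_kl.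
have mblock l : measurable (block_violation n l).
  by apply: bigsetU_measurable => i _; exact: measurable_violation.
apply: le_trans (measure_sigma_subadditive P mblock mA (notA_n_sub beta n)) _.
have c0 : 0 <= 2 * expR (3 / 2) * expR (- (ln n%:R / 2)) :> R.
  by rewrite !mulr_ge0 ?expR_ge0.
apply: le_trans (nneseries_inv_sqr_le _ _ c0).
by apply: lee_nneseries => [l _ _|l _]; [exact: measure_ge0|exact: P_block_violation_le].
Qed.

End union_bound.

Lemma expR_half_lnN_cvg0 (R : realType) :
  expR (- (ln (n%:R : R) / 2)) @[n --> \oo] --> 0.
Proof.
have ln_half : (fun n : nat => ln (n%:R : R) / 2) @ \oo --> +oo.
  apply/cvgryPge => A; near=> n; rewrite ler_pdivlMr // -ler_expR lnK; last first.
    by rewrite posrE ltr0n; near: n; exact: nbhs_infty_gt.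
  by near: n; exact: nbhs_infty_ger.
exact: (cvg_comp _ _ ln_half (@cvgr_expR R)).
Unshelve. all: end_near.
Qed.

Theorem mainTheorem7 (R : realType) (beta F : R) (f0 : nat -> R)
  (d : measure_display) (T : measurableType d) (P : probability T R)
  (xi : nat -> {RV P >-> R}) :
  0 < beta -> 0 < F ->
  (\sum_(1 <= k <oo) (powR (k%:R) (2 * beta) * f0 k ^+ 2)%:E <= (F ^+ 2)%:E)%E ->
  iid_std_normal xi ->
  (P (~` A_n beta f0 xi n) @[n --> \oo] --> 0%E)%E.
Proof.
move=> _ _ _ [_ xi_normal].
pose bound n := 2 * expR (3 / 2) * expR (- (ln (n%:R : R) / 2)) * 2.
apply: (@squeeze_cvge _ _ _ _ (cst 0%E) _ (EFin \o bound)).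
- near=> n; rewrite measure_ge0 /=; apply: P_notA_n_le => //.
  by near: n; exists 1%N.
- exact: cvg_cst.
- apply: cvg_EFin; first exact: nearW.
  rewrite -(mul0r 2) -(mulr0 (2 * expR (3 / 2))).
  by apply: cvgMr_tmp; apply: cvgMl_tmp; exact: expR_half_lnN_cvg0.
Unshelve. all: end_near.
Qed.
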